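(* Let $m>2$ be an integer and let $q$ be a prime power with $(m-1)\mid(q-1)$ and $m\mid(q-1)$. Let $n=1+\frac{q-1}{m}$. Then $|C_m+C_n|\le q-1$. In particular, not every element of $\mathbb{F}_q$ is the sum of an $m$-potent and an $n$-potent.
   Context: For a prime power $q$ and an integer $k>1$, an element $a\in\mathbb{F}_q$ is called a $k$-potent if $a^k=a$, and $C_k$ denotes the set of all $k$-potents in $\mathbb{F}_q$. For sets $A,B\subseteq\mathbb{F}_q$, $A+B=\{a+b:a\in A,b\in B\}$. *)

From mathcomp Require Import all_boot all_order all_algebra all_field.
Set Implicit Arguments. Unset Strict Implicit. Unset Printing Implicit Defensive.
Import GRing.Theory.
Local Open Scope ring_scope.

Definition kpotents (F : finFieldType) (k : nat) : {set F} :=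
  [set a : F | a ^+ k == a].

Definition sumset (F : finFieldType) (A B : {set F}) : {set F} :=
  [set a + b | a in A, b in B].

(* Since the coprime m and m - 1 both divide q - 1, (m - 1) | (n - 1) and
   every m-potent is an n-potent.  Pick w <> 1 with w^(m-1) = 1.  The |C_m| pairs (0, c)
   with c <> 0 and (w, 1) have the same sums as their swaps (c, 0) and
   (1, w), which lie outside this family, so
   |C_m + C_n| <= |C_m| (|C_n| - 1) <= m (n - 1) = q - 1. *)

From mathcomp Require Import all_boot all_order all_algebra all_field.
From mathcomp Require Import all_fingroup all_solvable.

Set Implicit Arguments.
Unset Strict Implicit.
Unset Printing Implicit Defensive.

Import GRing.Theory.
Local Open Scope ring_scope.

Lemma card_kpotents_le (F : finFieldType) k :
  (1 < k)%N -> (#|kpotents F k| <= k)%N.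
Proof.
move=> k_gt1.
have size_p : size ('X^k - 'X : {poly F}) = k.+1.
  by rewrite size_polyDl ?size_polyXn // size_polyN size_polyX.
have p_neq0 : ('X^k - 'X : {poly F}) != 0 by rewrite -size_poly_eq0 size_p.
rewrite cardE -ltnS -size_p.
apply: (max_poly_roots p_neq0) (enum_uniq _).
apply/allP => x; rewrite mem_enum inE => /eqP xk.
by rewrite /root !hornerE xk subrr.
Qed.

Lemma expr_idem_cycle (R : pzSemiRingType) (a : R) k t :
  a ^+ k = a -> a ^+ (1 + t * k.-1) = a.
Proof.
move=> ak; case: k ak => [|k] ak; first by rewrite muln0 expr1.
elim: t => [|t IHt]; first by rewrite expr1.
by rewrite mulSn addnA add1n exprD ak -exprS -add1n IHt.
Qed.

Lemma kpotents_subset (F : finFieldType) k l :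
  (0 < l)%N -> (k.-1 %| l.-1)%N -> kpotents F k \subset kpotents F l.
Proof.
move=> l_gt0 /dvdnP[t lE]; apply/subsetP => a; rewrite !inE => /eqP ak.
by rewrite -(prednK l_gt0) -add1n lE expr_idem_cycle.
Qed.

Lemma exists_nontrivial_root_of_unity (F : finFieldType) d :
  (1 < d)%N -> (d %| #|F|.-1)%N -> exists2 w : F, w ^+ d = 1 & w != 1.
Proof.
move=> /pdivP[p p_pr /dvdnP[t ->]] pd_dvd.
have p_dvd : (p %| #|[set: {unit F}]%G|)%N.
  by rewrite card_finField_unit (dvdn_trans (dvdn_mull t (dvdnn p))).
have [u _ ou] := Cauchy p_pr p_dvd.
exists (FinRing.uval u).
  by rewrite mulnC exprM -FinRing.val_unitX -ou expg_order expr1n.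
apply: contraTneq (prime_gt1 p_pr) => u1.
by rewrite -ou (_ : u = 1%g) ?order1 //; apply: val_inj.
Qed.

Lemma card_imset_twins (T U : finType) (f : T -> U) (D E : {set T}) :
  E \subset D -> {in E, forall x, exists2 y, y \in D :\: E & f y = f x} ->
  (#|f @: D| <= #|D| - #|E|)%N.
Proof.
move=> sED twins.
have -> : f @: D = f @: (D :\: E).
  apply/eqP; rewrite eqEsubset (imsetS _ (subsetDl D E)) andbT.
  apply/subsetP => _ /imsetP[x xD ->].
  have [xE | xNE] := boolP (x \in E).
    by have [y yDE <-] := twins x xE; apply: imset_f.
  by apply: imset_f; rewrite inE xNE.
by rewrite -cardsDS // leq_imset_card.
Qed.

Lemma card_sumset_le_swap (F : finFieldType) (A B : {set F}) (E : {set F * F}) :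
  E \subset setX A B -> {in E, forall p, (p.2, p.1) \in setX A B :\: E} ->
  (#|sumset A B| <= #|A| * #|B| - #|E|)%N.
Proof.
move=> sEAB swapE; rewrite /sumset curry_imset2X -cardsX.
apply: card_imset_twins => // -[a b] abE.
by exists (b, a); [exact: (swapE _ abE) | rewrite /= addrC].
Qed.

Lemma exists_notin_card_lt (T : finType) (S : {set T}) :
  (#|S| < #|T|)%N -> exists x, x \notin S.
Proof.
move=> ltST; have /subsetPn[x _ xNS] : ~~ ([set: T] \subset S).
  by apply: contraL ltST => /subset_leq_card; rewrite cardsT -leqNgt.
by exists x.
Qed.

Lemma card_sumset_le_pred (F : finFieldType) (A B : {set F}) (w : F) :
  A \subset B -> 0 \in A -> 1 \in A -> w \in A -> w != 0 -> w != 1 ->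
  (#|sumset A B| <= #|A| * #|B|.-1)%N.
Proof.
move=> sAB A0 A1 Aw w_neq0 w_neq1.
have B0 := subsetP sAB 0 A0; have Bw := subsetP sAB w Aw.
pose E := (w, 1) |: [set (0, c) | c in A :\ 0].
have w1_notin : (w, 1) \notin [set (0, c) | c in A :\ 0].
  by apply/imsetP => -[c _ [w0 _]]; rewrite w0 eqxx in w_neq0.
have cardE : #|E| = #|A|.
  rewrite cardsU1 w1_notin card_imset; last by move=> ? ? [].
  by rewrite (cardsD1 0 A) A0.
rewrite -subn1 mulnBr muln1 -{2}cardE.
apply: card_sumset_le_swap => [|[a b]].
  apply/subsetP => _ /setU1P[-> | /imsetP[c /setD1P[_ Ac] ->]];
    by rewrite inE ?Aw ?A0 (subsetP sAB).
case/setU1P => [[-> ->] | /imsetP[c /setD1P[c_neq0 Ac] [-> ->]]] /=.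
  rewrite !inE A1 Bw xpair_eqE (negPf w_neq1) andbF /= andbT.
  by apply/imsetP => -[c _ [/eqP]]; rewrite oner_eq0.
rewrite !inE Ac B0 xpair_eqE [0 == 1]eq_sym oner_eq0 andbF /= andbT.
by apply/imsetP => -[d _ [c0 _]]; rewrite c0 eqxx in c_neq0.
Qed.

Theorem mainTheorem6 (F : finFieldType) (q m : nat) :
  #|F| = q -> (2 < m)%N -> (m.-1 %| q.-1)%N -> (m %| q.-1)%N ->
  let n := (1 + q.-1 %/ m)%N in
  (#|sumset (kpotents F m) (kpotents F n)| <= q.-1)%N /\
  exists x : F, x \notin sumset (kpotents F m) (kpotents F n).
Proof.
move=> cardF m_gt2 dvd_m1 dvd_m n.
have m_gt0 : (0 < m)%N by apply: ltnW (ltnW m_gt2).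
have q1_gt0 : (0 < q.-1)%N.
  by rewrite -cardF -card_finField_unit; apply/card_gt0P; exists 1%g.
have qE : q.-1 = (m * n.-1)%N by rewrite /n add1n /= mulnC divnK.
have n_gt1 : (1 < n)%N.
  by move: q1_gt0; rewrite qE muln_gt0 => /andP[_]; rewrite /n add1n.
have dvd_n1 : (m.-1 %| n.-1)%N.
  rewrite /n add1n /= dvdn_divRL // Gauss_dvd ?dvd_m1 ?dvd_m //.
  by rewrite -{2}(prednK m_gt0) coprimenS.
have m1_gt1 : (1 < m.-1)%N by rewrite -ltnS prednK.
have [w w_root w_neq1] : exists2 w : F, w ^+ m.-1 = 1 & w != 1.
  by apply: exists_nontrivial_root_of_unity; rewrite ?cardF.
have w_neq0 : w != 0.
  apply: contra_eq_neq w_root => ->.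
  by rewrite expr0n gtn_eqF ?(ltnW m1_gt1) // eq_sym oner_neq0.
set A := kpotents F m; set B := kpotents F n.
have A0 : 0 \in A by rewrite inE expr0n gtn_eqF.
have A1 : 1 \in A by rewrite inE expr1n.
have Aw : w \in A by rewrite inE -(prednK m_gt0) exprS w_root mulr1.
have sumset_le : (#|sumset A B| <= q.-1)%N.
  have sAB : A \subset B := kpotents_subset F (ltnW n_gt1) dvd_n1.
  apply: leq_trans (card_sumset_le_pred sAB A0 A1 Aw w_neq0 w_neq1) _.
  rewrite qE leq_mul ?card_kpotents_le ?(ltnW m_gt2) //.
  by rewrite -!subn1 leq_sub2r ?card_kpotents_le.
split => //; apply: exists_notin_card_lt.
rewrite (leq_ltn_trans sumset_le) // -cardF ltn_predL.
by apply/card_gt0P; exists 0.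
Qed.
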